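(* Let $\alpha,\beta,\gamma>0$ with $\gamma<1/5$, $\delta<1/2$, and $x_0,y\in\mathcal D(\delta)$ with $\|x_0-y\|\le\frac45r_\delta$ lying on different sides of a barrier $B_i$, $i\ge1$. Let $X$ be the snapping-out Brownian motion with $X_0=x_0$ (driven by $W$ and $s_1,\dots,s_m$), and suppose the event $$\mathcal A:=\Big\{\mathcal E_1<\alpha r_\delta,\ \mathcal E_2>\beta r_\delta,\ \|W_t-(t/r_\delta^2)(y-x_0)\|\le\gamma r_\delta\ \forall t\le r_\delta^2\Big\}$$ occurs. Then for every $t\le r_\delta^2$ with $L^{(i)}_t<(1/5-\gamma)r_\delta$ one has $X_t\in\mathsf B(x_0,r_\delta)$.
   Context: Setting. $D\subseteq\mathbb R^2$ is the closure of a bounded open set $D_0$; $D$ is connected and simply connected, with $C^\infty$ boundary $B_0:=\partial D$, a simple closed curve. $B_1,\dots,B_m\subseteq D_0$ are $C^\infty$ simple closed curves with $B_i\cap B_j=\emptyset$ for $i\neq j$ ($0\le i,j\le m$). For each $i$, the positive side of $B_i$ is the closure of the bounded component of $\mathbb R^2\setminus B_i$, the negative side the closure of the unbounded component (points of $B_i$ lie on both sides); $\vec n_i$ is the unit normal field on $B_i$ pointing into the bounded component. Fix $\lambda_i^\pm>0$. Let $W_t$ be a standard planar Wiener process and, independently, $s_1,\dots,s_m$ independent càdlàg Markov chains on $\{-1,+1\}$, $s_i$ jumping from $-1$ to $+1$ at rate $\lambda_i^+$ and from $+1$ to $-1$ at rate $\lambda_i^-$; $s_0\equiv+1$. A snapping-out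 Brownian motion is a family of continuous processes $X_t\in D$, $L^{(i)}_t\ge0$ such that a.s.: (i) $dX_t=dW_t+\sum_{i=0}^m s_i(L^{(i)}_t)\vec n_i(X_t)\mathbf 1\{X_t\in B_i\}dL^{(i)}_t$; (ii) $L^{(i)}$ nondecreasing, $L^{(i)}_0=0$, $L^{(i)}_t=\int_0^t\mathbf 1\{X_r\in B_i\}dL^{(i)}_r$; (iii) $s_i(L^{(i)}_t)=+1$ (resp. $-1$) implies $X_t$ is on the positive (resp. negative) side of $B_i$. Here $s_i(0)$ is $+1$ if $x_0$ is on the positive side of $B_i$ and $-1$ otherwise. Parameters: $\lambda_{\max}=\max\lambda_j^\pm$; $\kappa$ maximal unsigned curvature of $B_0,\dots,B_m$; $\rho:=\sup\{r\ge0:\mathsf B(x,r')\cap\bigcup_jB_j\text{ connected }\forall r'\le r,\ x\in D\}$ ($\mathsf B$ = open ball); $r_\delta:=\delta\min\{1/\kappa,1/\lambda_{\max},\rho\}$; $\mathcal D(\delta):=\{x\in D:\|x-z\|\ge r_\delta/5\ \forall z\in\bigcup_jB_j\}$. Also $\mathcal E_1:=\inf\{t\ge0:s_i(t)\ne s_i(0)\}$ and $\mathcal E_2:=\inf\{t\ge\mathcal E_1:s_i(t)\ne s_i(\mathcal E_1)\}-\mathcal E_1$. *)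

From HB Require Import structures.
From mathcomp Require Import all_boot all_order all_algebra.
From mathcomp Require Import all_classical all_reals all_analysis.
Set Implicit Arguments. Unset Strict Implicit. Unset Printing Implicit Defensive.
Import Order.TTheory GRing.Theory Num.Theory.
Import numFieldNormedType.Exports.
Local Open Scope classical_set_scope.
Local Open Scope ring_scope.

Section Plane.
Variable R : realType.

(* Points of the plane R^2 are pairs; we use the Euclidean norm explicitly
   (the library norm on pairs is the max norm). The topology on R*R is the
   product topology, i.e. the usual topology of R^2. *)
Definition padd (x y : R * R) : R * R := (x.1 + y.1, x.2 + y.2).
Definition psub (x y : R * R) : R * R := (x.1 - y.1, x.2 - y.2).
Definition pscale (a : R) (x : R * R) : R * R := (a * x.1, a * x.2).
Definition dot (x y : R * R) : R := x.1 * y.1 + x.2 * y.2.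
Definition enorm (x : R * R) : R := Num.sqrt (dot x x).

Definition eball (x : R * R) (r : R) : set (R * R) :=
  [set z | enorm (psub z x) < r].

Definition smooth_fun (f : R -> R) : Prop :=
  forall (k : nat) (t : R), derivable (derive1n k f) t 1.

Definition vel (c : R -> R * R) (t : R) : R * R :=
  (derive1 (fun u => (c u).1) t, derive1 (fun u => (c u).2) t).
Definition acc (c : R -> R * R) (t : R) : R * R :=
  (derive1n 2 (fun u => (c u).1) t, derive1n 2 (fun u => (c u).2) t).

(* c is a regular C^infinity parametrization, of period 1 and injective on
   [0,1), of a simple closed curve (the curve is the set  range c). *)
Definition smooth_simple_closed_curve (c : R -> R * R) : Prop :=
  [/\ smooth_fun (fun u => (c u).1), smooth_fun (fun u => (c u).2),
      (forall t, c (t + 1) = c t),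
      (forall s t, 0 <= s < 1 -> 0 <= t < 1 -> c s = c t -> s = t) &
      (forall t, vel c t != (0, 0))].

Definition curvature (c : R -> R * R) (t : R) : R :=
  `| (vel c t).1 * (acc c t).2 - (vel c t).2 * (acc c t).1 |
  / (Num.sqrt (dot (vel c t) (vel c t))) ^+ 3.

Definition in_bounded_comp (B : set (R * R)) : set (R * R) :=
  [set x | ~ B x /\ bounded_set (connected_component (~` B) x)].
Definition in_unbounded_comp (B : set (R * R)) : set (R * R) :=
  [set x | ~ B x /\ ~ bounded_set (connected_component (~` B) x)].

Definition pos_side (B : set (R * R)) : set (R * R) :=
  closure (in_bounded_comp B).
Definition neg_side (B : set (R * R)) : set (R * R) :=
  closure (in_unbounded_comp B).

Definition simply_connected (D : set (R * R)) : Prop :=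
  forall g : R -> R * R,
    {within `[0, 1], continuous g} -> (forall s, 0 <= s <= 1 -> D (g s)) ->
    g 0 = g 1 ->
    exists H : R * R -> R * R,
      [/\ {within `[0, 1] `*` `[0, 1], continuous H},
          (forall s u, 0 <= s <= 1 -> 0 <= u <= 1 -> D (H (s, u))),
          (forall s, 0 <= s <= 1 -> H (s, 0) = g s),
          (forall s, 0 <= s <= 1 -> H (s, 1) = g 0) &
          (forall u, 0 <= u <= 1 -> H (0, u) = g 0 /\ H (1, u) = g 0)].

Definition ind (A : set (R * R)) (x : R * R) : R :=
  if `[< A x >] then 1 else 0.

End Plane.

Section Params.
Variables (R : realType) (m : nat) (c : 'I_m.+1 -> R -> R * R).

Definition all_barriers : set (R * R) := \bigcup_(j in setT) range (c j).

Definition kappa : R := sup [set curvature (c j) t | j in setT & t in setT].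

Definition rho (D : set (R * R)) : R :=
  sup [set r | 0 <= r /\ forall r' x, r' <= r -> D x ->
               connected (eball x r' `&` all_barriers)].

Definition lambda_max (lp lm : 'I_m.+1 -> R) : R :=
  \big[Num.max/0]_(j < m.+1 | j != ord0) Num.max (lp j) (lm j).

Definition r_delta (D : set (R * R)) (lp lm : 'I_m.+1 -> R) (delta : R) : R :=
  delta * Num.min (kappa^-1) (Num.min ((lambda_max lp lm)^-1) (rho D)).

Definition calD (D : set (R * R)) (lp lm : 'I_m.+1 -> R) (delta : R)
  : set (R * R) :=
  [set x | D x /\ forall z, all_barriers z ->
     r_delta D lp lm delta / 5 <= enorm (psub x z)].

End Params.

Section Switch.
Variable R : realType.
Local Open Scope ereal_scope.
(* first switching time E_1 and the next holding time E_2 of the path s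
   (as extended reals: +oo if there is no such switch) *)
Definition E1 (s : R -> R) : \bar R :=
  ereal_inf [set t%:E | t in [set t : R | (0 <= t)%R /\ s t <> s 0%R]].
Definition E2 (s : R -> R) : \bar R :=
  ereal_inf [set t%:E | t in [set t : R | E1 s <= t%:E /\ s t <> s (fine (E1 s))]]
  - E1 s.
End Switch.

From HB Require Import structures.
From mathcomp Require Import all_boot all_order all_algebra.
From mathcomp Require Import all_classical all_reals all_analysis.
From mathcomp Require Import measurable_realfun ring lra.
Import Order.TTheory GRing.Theory Num.Theory.
Import numFieldNormedType.Exports.
Local Open Scope classical_set_scope.
Local Open Scope ring_scope.

Set Implicit Arguments. Unset Strict Implicit. Unset Printing Implicit Defensive.

(* The points x0 and y lie on different sides of B_i and keep distance r/5 from
   the barriers, so the segment [x0, y] meets B_i at a point p with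
   |p - x0| <= |x0 - y| <= 4r/5.  Since 2r < rho, the barriers inside the ball
   B(x0, 2r) form a connected set meeting B_i, hence they all lie in B_i.  As
   long as X stays within r of x0, only B_i pushes it, along unit normals, so
   |X_t - x0 - W_t| <= L^(i)_t < (1/5 - gamma) r, while on the event A
   |W_t| <= gamma r + 4r/5.  Hence |X_t - x0| < r, and a first-exit argument
   propagates this to all t <= r^2. *)

Section Euclid.
Variable R : realType.
Implicit Types (u v a b : R * R) (k e M : R).

Lemma dot_ge0 v : 0 <= dot v v.
Proof. rewrite /dot; nra. Qed.

Lemma enorm_ge0 v : 0 <= enorm v.
Proof. exact: sqrtr_ge0. Qed.

Lemma enorm_sqr v : enorm v ^+ 2 = dot v v.
Proof. by rewrite sqr_sqrtr // dot_ge0. Qed.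

Lemma enorm_le M v : 0 <= M -> dot v v <= M ^+ 2 -> enorm v <= M.
Proof. by move=> M0 vM; rewrite -(ger0_norm M0) -sqrtr_sqr ler_sqrt // sqr_ge0. Qed.

Lemma enorm_scale k v : enorm (pscale k v) = `|k| * enorm v.
Proof.
rewrite /enorm /dot /pscale /= -sqrtr_sqr -sqrtrM ?sqr_ge0 //; congr Num.sqrt; ring.
Qed.

Lemma enorm_scale_le k v : 0 <= k <= 1 -> enorm (pscale k v) <= enorm v.
Proof.
move=> /andP[k0 k1]; rewrite enorm_scale ger0_norm // -[leRHS]mul1r.
by apply: ler_wpM2r => //; exact: enorm_ge0.
Qed.

Lemma enorm_psubC a b : enorm (psub a b) = enorm (psub b a).
Proof. by rewrite /enorm /dot /psub /=; congr Num.sqrt; ring. Qed.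

Lemma enorm_psubxx a : enorm (psub a a) = 0.
Proof. by rewrite /enorm /dot /psub /= !subrr mulr0 addr0 sqrtr0. Qed.

Lemma enorm_psub_eq0 a b : enorm (psub a b) = 0 -> a = b.
Proof.
case: a b => [a1 a2] [b1 b2] /(congr1 (fun x => x ^+ 2)).
rewrite enorm_sqr expr0n /dot /= => e.
have := sqr_ge0 (a1 - b1); have := sqr_ge0 (a2 - b2); rewrite !expr2 => h2 h1.
by congr pair; nra.
Qed.

Lemma dot_le_enorm u v : dot u v <= enorm u * enorm v.
Proof.
have [le0|gt0] := leP (dot u v) 0.
  by apply: le_trans le0 _; rewrite mulr_ge0 // enorm_ge0.
rewrite -(ler_pXn2r (n := 2)) ?nnegrE ?(ltW gt0) ?mulr_ge0 ?enorm_ge0 //.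
rewrite exprMn !enorm_sqr /dot.
(* Lagrange's identity: [|u|^2 |v|^2 - (u.v)^2 = (u1 v2 - u2 v1)^2]. *)
have := sqr_ge0 (u.1 * v.2 - u.2 * v.1); rewrite !expr2; nra.
Qed.

Lemma ler_enormD u v : enorm (padd u v) <= enorm u + enorm v.
Proof.
apply: enorm_le; first by rewrite addr_ge0 ?enorm_ge0.
have := dot_le_enorm u v; rewrite sqrrD !enorm_sqr /dot /padd /=; nra.
Qed.

Lemma enorm_fst_le v : `|v.1| <= enorm v.
Proof.
rewrite -(ler_pXn2r (n := 2)) ?nnegrE ?normr_ge0 ?enorm_ge0 //.
by rewrite real_normK ?num_real // enorm_sqr /dot; nra.
Qed.

Lemma enorm_snd_le v : `|v.2| <= enorm v.
Proof.
rewrite -(ler_pXn2r (n := 2)) ?nnegrE ?normr_ge0 ?enorm_ge0 //.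
by rewrite real_normK ?num_real // enorm_sqr /dot; nra.
Qed.

Lemma enorm_le_l1 v : enorm v <= `|v.1| + `|v.2|.
Proof.
apply: enorm_le; first by rewrite addr_ge0.
rewrite sqrrD !real_normK ?num_real // /dot.
by have := mulr_ge0 (normr_ge0 v.1) (normr_ge0 v.2); nra.
Qed.

Lemma eball_nbhs a e : 0 < e -> nbhs a (eball a e).
Proof.
move=> e0; exists (ball a.1 (e / 2), ball a.2 (e / 2)) => /=.
  by split; apply: nbhsx_ballx; rewrite divr_gt0.
move=> [z1 z2] [/= h1 h2]; rewrite /eball /ball /= in h1 h2 *.
rewrite distrC in h1; rewrite distrC in h2.
by apply: le_lt_trans (enorm_le_l1 _) _ => /=; lra.
Qed.

End Euclid.

Section Segment.
Variable R : realType.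
Implicit Types (a b : R * R) (B : set (R * R)).

Definition seg a b (l : R) : R * R := padd a (pscale l (psub b a)).

Lemma seg_continuous a b : continuous (seg a b).
Proof.
move=> l; apply: (@cvg_pair _ _ _ _ (nbhs (seg a b l).1) (nbhs (seg a b l).2)) => /=.
  by apply: cvgD; [exact: cvg_cst | apply: cvgM; [exact: cvg_id | exact: cvg_cst]].
by apply: cvgD; [exact: cvg_cst | apply: cvgM; [exact: cvg_id | exact: cvg_cst]].
Qed.

Lemma seg0 a b : seg a b 0 = a.
Proof. by case: a => a1 a2; rewrite /seg /padd /pscale /=; congr pair; ring. Qed.

Lemma seg1 a b : seg a b 1 = b.
Proof.
by case: a b => [a1 a2] [b1 b2]; rewrite /seg /padd /pscale /psub /=; congr pair; ring.
Qed.

Lemma psub_segl a b l : psub (seg a b l) a = pscale l (psub b a).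
Proof.
by case: a b => [a1 a2] [b1 b2]; rewrite /seg /padd /pscale /psub /=; congr pair; ring.
Qed.

Lemma psub_segr a b l : psub (seg a b l) b = pscale (1 - l) (psub a b).
Proof.
by case: a b => [a1 a2] [b1 b2]; rewrite /seg /padd /pscale /psub /=; congr pair; ring.
Qed.

Lemma connected_seg a b : connected [set seg a b l | l in `[(0 : R), 1]].
Proof.
apply: connected_continuous_connected.
  by apply/connected_intervalP; exact: interval_is_interval.
exact/continuous_subspaceT/seg_continuous.
Qed.

Lemma connected_component_seg B a b :
  (forall l, 0 <= l <= 1 -> ~ B (seg a b l)) -> connected_component (~` B) a b.
Proof.
move=> segNB; pose S := [set seg a b l | l in `[(0 : R), 1]].
have Sa : S a by exists 0; [rewrite /= in_itv /= lexx ler01 | exact: seg0].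
have Sb : S b by exists 1; [rewrite /= in_itv /= lexx ler01 | exact: seg1].
have SNB : S `<=` ~` B.
  by move=> _ [l /= l01 <-]; apply: segNB; rewrite in_itv /= in l01.
exact: (connected_component_max Sa SNB (@connected_seg a b)) _ Sb.
Qed.

(* The closure witness is joined to [a] by a segment avoiding [B]. *)
Lemma pos_side_bounded_component B a e : 0 < e ->
  (forall z, B z -> e <= enorm (psub a z)) -> pos_side B a ->
  bounded_set (connected_component (~` B) a).
Proof.
move=> e0 far /(_ _ (eball_nbhs a e0)) [z [[_ bz] az]].
suff caz : connected_component (~` B) a z by rewrite (same_connected_component caz).
apply: connected_component_seg => l /andP[l0 l1] /far.
rewrite enorm_psubC psub_segl enorm_scale ger0_norm //; move: az; rewrite /eball /=.
by have := enorm_ge0 (psub z a); nra.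
Qed.

Lemma seg_meets_of_pos_side B a b e : 0 < e ->
  (forall z, B z -> e <= enorm (psub a z)) ->
  (forall z, B z -> e <= enorm (psub b z)) ->
  pos_side B a -> ~ pos_side B b -> exists2 l, 0 <= l <= 1 & B (seg a b l).
Proof.
move=> e0 fara farb pa; apply: contra_notP => segNB.
have cab : connected_component (~` B) a b.
  by apply: connected_component_seg => l l01 Bl; apply: segNB; exists l.
apply: subset_closure; split.
  by move=> /farb; rewrite enorm_psubxx leNgt e0.
by rewrite -(same_connected_component cab); exact: pos_side_bounded_component e0 fara pa.
Qed.

Lemma barrier_between B a b e : 0 < e ->
  (forall z, B z -> e <= enorm (psub a z)) ->
  (forall z, B z -> e <= enorm (psub b z)) ->
  (pos_side B a /\ ~ pos_side B b) \/ (~ pos_side B a /\ pos_side B b) ->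
  exists2 p, B p & enorm (psub p a) <= enorm (psub a b).
Proof.
move=> e0 fara farb [[pa npb]|[npa pb]].
  have [l l01 Bl] := seg_meets_of_pos_side e0 fara farb pa npb.
  by exists (seg a b l); rewrite // psub_segl (enorm_psubC a) enorm_scale_le.
have [l /andP[l0 l1] Bl] := seg_meets_of_pos_side e0 farb fara pb npa.
exists (seg b a l); rewrite // psub_segr (enorm_psubC a) enorm_scale_le //.
by apply/andP; split; lra.
Qed.

Lemma enorm_psub_gt0_of_sides B a b :
  (pos_side B a /\ ~ pos_side B b) \/ (~ pos_side B a /\ pos_side B b) ->
  0 < enorm (psub a b).
Proof.
move=> sides; rewrite lt_neqAle enorm_ge0 andbT eq_sym.
by apply/eqP => /enorm_psub_eq0 ab; move: sides; rewrite ab; tauto.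
Qed.

End Segment.

Section Curves.
Variable R : realType.

Lemma smooth_fun_continuous (f : R -> R) : smooth_fun f -> continuous f.
Proof.
move=> f_smooth t; apply: differentiable_continuous; apply/derivable1_diffP.
exact: (f_smooth 0%N t).
Qed.

Lemma smooth_curve_continuous (c : R -> R * R) :
  smooth_simple_closed_curve c -> continuous c.
Proof.
case=> c1 c2 _ _ _ t.
have -> : c = fun u => ((c u).1, (c u).2) by apply: funext => u; case: (c u).
by apply: (@cvg_pair _ _ _ _ (nbhs (c t).1) (nbhs (c t).2));
  exact: smooth_fun_continuous.
Qed.

Section Periodic.
Variable c : R -> R * R.
Hypothesis c_periodic : forall t, c (t + 1) = c t.

Lemma periodicDn (n : nat) t : c (t + n%:R) = c t.
Proof.
elim: n t => [|n IHn] t; first by rewrite addr0.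
by rewrite -addn1 natrD addrA c_periodic IHn.
Qed.

Lemma periodicBz (k : int) t : c (t - k%:~R) = c t.
Proof.
case: k => n; first by rewrite -[in RHS](subrK n%:R t) periodicDn.
by rewrite NegzE mulrNz opprK -pmulrn periodicDn.
Qed.

Lemma range_periodic : range c = c @` `[(0 : R), 1].
Proof.
apply/seteqP; split => _ [t _ <-]; last by exists t.
have /andP[ft tf] := floor_itv t; rewrite intrD in tf.
by exists (t - (Num.floor t)%:~R); [rewrite /= in_itv /=; apply/andP; split; lra |
  exact: periodicBz].
Qed.

End Periodic.

Lemma closed_range_curve (c : R -> R * R) :
  smooth_simple_closed_curve c -> closed (range c).
Proof.
move=> c_smooth; have c_cont := smooth_curve_continuous c_smooth.
case: c_smooth => _ _ c_periodic _ _; rewrite (range_periodic c_periodic).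
apply: compact_closed; first exact: norm_hausdorff.
by apply: continuous_compact; [exact: continuous_subspaceT | exact: segment_compact].
Qed.

End Curves.

(* The complement of the other pieces is open, so it cuts the connected [K]. *)
Lemma connected_sub_bigcup_closed (T : topologicalType) (n : nat)
    (F : 'I_n -> set T) (K : set T) (i : 'I_n) :
  connected K -> K `<=` \bigcup_(j in setT) F j -> (forall j, closed (F j)) ->
  (forall j k, j != k -> F j `&` F k = set0) -> K `&` F i !=set0 ->
  K `<=` F i.
Proof.
move=> cK KF Fcl Fdisj KFi.
pose G := \bigcup_(j in [set j | j != i]) F j.
have Gcl : closed G by apply: closed_bigcup => //; exact: finite_finset.
suff <- : K `&` F i = K by move=> z [].
apply: cK => //; last by exists (F i).
exists (~` G); first by rewrite openC.
apply/seteqP; split => z [Kz Fz]; split => //.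
  move=> [j /= ji Fjz]; have /seteqP[+ _] := Fdisj j i ji.
  by move=> /(_ z) /=; apply.
have [j _ Fjz] := KF z Kz; have [<-//|ji] := eqVneq j i.
by exfalso; apply: Fz; exists j.
Qed.

Section Barriers.
Variables (R : realType) (m : nat) (c : 'I_m.+1 -> R -> R * R) (D : set (R * R)).

Lemma connected_eball_barriers x e : D x -> 0 <= e -> e < rho c D ->
  connected (eball x e `&` all_barriers c).
Proof.
move=> Dx e0; rewrite /rho; set S := [set r | _] => eS.
have supS : has_sup S.
  by apply/not_notP => /sup_out eS0; move: eS; rewrite eS0 ltNge e0.
have gap : 0 < sup S - e by rewrite subr_gt0.
have [e' [_ e'S] ee'] := sup_adherent gap supS.
by apply: e'S => //; lra.
Qed.

Lemma r_delta_lt_rho (lp lm : 'I_m.+1 -> R) delta :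
  0 < delta -> delta < 2^-1 -> 0 < r_delta c D lp lm delta ->
  2 * r_delta c D lp lm delta < rho c D.
Proof.
move=> delta0 delta2; rewrite /r_delta; set mn := Num.min _ _ => r0.
have mn0 : 0 < mn by move: r0; rewrite pmulr_rgt0.
have : mn <= rho c D by rewrite /mn !ge_min lexx !orbT.
nra.
Qed.

Lemma eball_barriers_sub (i : 'I_m.+1) x e :
  (forall j, smooth_simple_closed_curve (c j)) ->
  (forall j k, j != k -> range (c j) `&` range (c k) = set0) ->
  D x -> 0 <= e -> e < rho c D -> eball x e `&` range (c i) !=set0 ->
  eball x e `&` all_barriers c `<=` range (c i).
Proof.
move=> c_smooth c_disj Dx e0 e_rho [p [xp ip]].
apply: connected_sub_bigcup_closed c_disj _ => //.
- exact: connected_eball_barriers Dx e0 e_rho.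
- by move=> j; exact: closed_range_curve.
by exists p; split => //; split => //; exists i.
Qed.

End Barriers.

Lemma within_preimage_continuous (T U V : topologicalType) (X : T -> U)
    (B : set U) (g : U -> V) :
  continuous X -> {within B, continuous g} -> {within X @^-1` B, continuous (g \o X)}.
Proof.
move=> X_cont /subspace_continuousP g_cont; apply/subspace_continuousP => u Bu.
suff XB : X @ within (X @^-1` B) (nbhs u) --> within B (nbhs (X u)).
  exact: cvg_comp XB (g_cont _ Bu).
move=> P /= BP; rewrite /within /=.
have XBP : nbhs u (X @^-1` (fun z => B z -> P z)) by exact: X_cont.
by apply: filterS XBP => v /= Pv Bv; exact: Pv.
Qed.

Lemma continuous_enorm_psub (T : topologicalType) (R : realType) (X : T -> R * R) a :
  continuous X -> continuous (fun u => enorm (psub (X u) a)).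
Proof.
move=> X_cont u.
have X1 : (fun v => (X v).1) @ u --> (X u).1.
  exact: cvg_comp (X_cont u) (@cvg_fst _ _ (nbhs (X u).1) (nbhs (X u).2) _).
have X2 : (fun v => (X v).2) @ u --> (X u).2.
  exact: cvg_comp (X_cont u) (@cvg_snd _ _ (nbhs (X u).1) (nbhs (X u).2) _).
suff dot_cvg : (fun v => dot (psub (X v) a) (psub (X v) a)) @ u -->
    dot (psub (X u) a) (psub (X u) a).
  exact: cvg_comp dot_cvg (@sqrt_continuous R _).
by apply: cvgD; apply: cvgM; apply: cvgB => //; exact: cvg_cst.
Qed.

Section Measurability.
Variable R : realType.

(* Rational right endpoints make the level set of [s \o L] a countable union of
   intervals. *)
Lemma pm1_right_continuous_rat (s : R -> R) v :
  (forall w, 0 <= w -> s w = 1 \/ s w = -1) -> s x @[x --> v^'+] --> s v ->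
  0 <= v -> s v = 1 ->
  exists2 q : rat, v <= ratr q & forall w, v <= w <= ratr q -> s w = 1.
Proof.
move=> s_pm1 s_rc v0 sv.
have /nbhs_ballP[e /= e0 near_v] : \forall x \near v^'+, `|s v - s x| < 1.
  exact: cvgr_dist_lt s_rc _ ltr01.
have [q] : exists q : rat, ratr q \in `]v, v + e[ by apply: rat_in_itvoo; rewrite ltrDl.
rewrite in_itv /= => /andP[vq qe].
exists q => [|w /andP[vw wq]]; first exact: ltW.
have [->//|wv] := eqVneq w v.
have vw' : v < w by rewrite lt_neqAle eq_sym wv vw.
have : `|s v - s w| < 1.
  by apply: near_v vw'; rewrite /ball /= ltr_norml; apply/andP; split; lra.
by rewrite sv; have [|->] := s_pm1 w (le_trans v0 vw); [|rewrite opprK ger0_norm; lra].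
Qed.

Section LocalTimeComposition.
Variables (s L : R -> R) (D : set R).
Hypothesis D_itv : is_interval D.
Hypothesis L_ge0 : forall u, D u -> 0 <= L u.
Hypothesis L_mono : forall u v, D u -> D v -> u <= v -> L u <= L v.
Hypothesis s_pm1 : forall w, 0 <= w -> s w = 1 \/ s w = -1.
Hypothesis s_rc : forall w, 0 <= w -> s x @[x --> w^'+] --> s w.

Lemma measurable_pm1_level : measurable [set u | D u /\ s (L u) = 1].
Proof.
pose C (q : rat) := [set u | D u /\ 0 <= L u /\ L u <= ratr q /\
  forall w, L u <= w <= ratr q -> s w = 1].
suff -> : [set u | D u /\ s (L u) = 1] = \bigcup_q C q.
  apply: bigcupT_measurable_rat => q; apply: is_interval_measurable.
  move=> x y [Dx [_ [_ sx]]] [Dy [_ [Lyq _]]] z /andP[xz zy].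
  have Dz : D z by apply: (D_itv Dx Dy); rewrite xz zy.
  have Lxz := L_mono Dx Dz xz; have Lzy := L_mono Dz Dy zy.
  split => //; split; first exact: L_ge0.
  split; first exact: le_trans Lyq.
  by move=> w /andP[zw wq]; apply: sx; rewrite wq (le_trans Lxz).
apply/seteqP; split => u.
  move=> [Du su]; have [q Lq sq] := pm1_right_continuous_rat s_pm1 (s_rc (L_ge0 Du)) (L_ge0 Du) su.
  by exists q => //; split => //; split; [exact: L_ge0 | split].
by move=> [q _ [Du [_ [Lq sq]]]]; split => //; apply: sq; rewrite lexx Lq.
Qed.

Lemma measurable_pm1_comp : measurable D -> measurable_fun D (fun u => s (L u)).
Proof.
move=> mD; set A := [set u | D u /\ s (L u) = 1].
have mA : measurable_fun D (\1_A : R -> R) := measurable_indic measurable_pm1_level.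
have := measurable_funD mA (measurable_funD mA (measurable_cst (-1 : R))).
apply: eq_measurable_fun => u /set_mem Du; rewrite /indic /=.
have [/set_mem[_ ->]|uA] := boolP (u \in A) => /=; first lra.
have [sL1|->] := s_pm1 (L_ge0 Du); last lra.
by exfalso; move: uA; rewrite mem_set.
Qed.

End LocalTimeComposition.

Lemma measurable_ind_comp (X : R -> R * R) (B : set (R * R))
    (g : R * R -> R) (D : set R) :
  measurable D -> continuous X -> closed B -> {within B, continuous g} ->
  measurable_fun D (fun u => ind B (X u) * g (X u)).
Proof.
move=> mD X_cont B_closed g_cont.
have mXB : measurable (X @^-1` B).
  by apply: closed_measurable; move/continuous_closedP : X_cont; apply.
have mg := subspace_continuous_measurable_fun mXB (within_preimage_continuous X_cont g_cont).
have /(measurable_restrict _ mXB mD).1 : measurable_fun (D `&` X @^-1` B) (g \o X).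
  exact: measurable_funS mXB (@subIsetr _ _ _) mg.
apply: eq_measurable_fun => u _; rewrite /patch /ind.
case: ifPn => [/set_mem XBu|/negP XBu]; case: asboolP => //=; rewrite ?mul1r ?mul0r //.
by move=> Bu; exfalso; apply: XBu; exact/mem_set.
Qed.

End Measurability.

Section VectorIntegral.
Variables (R : realType) (mu : {measure set R -> \bar R}) (D : set R).
Hypothesis mD : measurable D.

Lemma integrable_of_bounded (g : R -> R) (K : R) :
  (mu D < +oo)%E -> measurable_fun D g -> (forall u, D u -> `|g u| <= K) ->
  mu.-integrable D (EFin \o g).
Proof.
move=> muD mg g_le; apply: measurable_bounded_integrable => //.
rewrite /bounded_near; near=> M => u Du /=; apply: le_trans (g_le u Du) _.
near: M; apply: nbhs_pinfty_ge; exact: num_real.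
Unshelve. all: by end_near.
Qed.

(* Testing the integral against its own direction [v] gives
   [enorm v ^+ 2 <= enorm v * M] by Cauchy-Schwarz under the integral. *)
Lemma enorm_Rintegral_le (f1 f2 : R -> R) (M : R) :
  mu D = M%:E -> measurable_fun D f1 -> measurable_fun D f2 ->
  (forall u, D u -> enorm (f1 u, f2 u) <= 1) ->
  enorm (\int[mu]_(u in D) f1 u, \int[mu]_(u in D) f2 u) <= M.
Proof.
move=> muD m1 m2 f_le1.
have M0 : 0 <= M by rewrite -lee_fin -muD measure_ge0.
have muDfin : (mu D < +oo)%E by rewrite muD ltry.
have f1_le1 u : D u -> `|f1 u| <= 1.
  by move=> Du; exact: le_trans (enorm_fst_le (f1 u, f2 u)) (f_le1 u Du).
have f2_le1 u : D u -> `|f2 u| <= 1.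
  by move=> Du; exact: le_trans (enorm_snd_le (f1 u, f2 u)) (f_le1 u Du).
have i1 := integrable_of_bounded muDfin m1 f1_le1.
have i2 := integrable_of_bounded muDfin m2 f2_le1.
set v := (\int[mu]_(u in D) f1 u, \int[mu]_(u in D) f2 u).
have mvf : measurable_fun D (fun u => v.1 * f1 u + v.2 * f2 u).
  by apply: measurable_funD; apply: measurable_funM => //; exact: measurable_cst.
have vf_le u : D u -> `|v.1 * f1 u + v.2 * f2 u| <= `|v.1| + `|v.2|.
  move=> Du; apply: le_trans (ler_normD _ _) _; rewrite !normrM.
  by apply: lerD; rewrite -[leRHS]mulr1 ler_wpM2l // ?f1_le1 ?f2_le1.
have scaled (k : R) (f : R -> R) : measurable_fun D f -> (forall u, D u -> `|f u| <= 1) ->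
    mu.-integrable D (EFin \o (fun u => k * f u)).
  move=> mf f_le; apply: (integrable_of_bounded (K := `|k|)) => //.
    by apply: measurable_funM => //; exact: measurable_cst.
  by move=> u Du; rewrite normrM -[leRHS]mulr1 ler_wpM2l // f_le.
have sqr_v : enorm v ^+ 2 = \int[mu]_(u in D) (v.1 * f1 u + v.2 * f2 u).
  by rewrite RintegralD ?scaled // !RintegralZl // enorm_sqr.
have : \int[mu]_(u in D) (v.1 * f1 u + v.2 * f2 u) <= \int[mu]_(u in D) enorm v.
  apply: le_Rintegral => //.
  - exact: integrable_of_bounded muDfin mvf vf_le.
  - apply: (integrable_of_bounded (K := enorm v)) => //.
    by move=> u Du; rewrite ger0_norm // enorm_ge0.
  move=> u Du; apply: le_trans (dot_le_enorm v (f1 u, f2 u)) _.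
  by rewrite -[leRHS]mulr1 ler_wpM2l ?enorm_ge0 // f_le1.
rewrite Rintegral_cst // muD /= -sqr_v.
by have := enorm_ge0 v; nra.
Qed.

End VectorIntegral.

(* Continuous induction: apply the hypothesis at the first time [f] reaches [r]. *)
Lemma continuous_first_exit (R : realType) (f : R -> R) (r t : R) :
  continuous f ->
  (forall tau, 0 <= tau <= t -> (forall u, 0 < u <= tau -> f u <= r) -> f tau < r) ->
  forall u, 0 <= u <= t -> f u < r.
Proof.
move=> f_cont step u /andP[u0 ut]; rewrite ltNge; apply/negP => ru.
pose F := [set v | 0 <= v <= t /\ r <= f v].
have Fu : F u by split; rewrite ?u0.
have infF : has_inf F by split; [exists u | exists 0 => v [/andP[]]].
pose tau := inf F.
have tau0 : 0 <= tau by apply: lb_le_inf; [exists u | move=> v [/andP[]]].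
have inf_le v : F v -> tau <= v by apply: ge_inf; exists 0 => w [/andP[]].
have tau_t : tau <= t by apply: le_trans (inf_le _ Fu) ut.
have below v : 0 <= v < tau -> f v < r.
  move=> /andP[v0 vtau]; rewrite ltNge; apply/negP => rv.
  have : tau <= v by apply: inf_le; split; rewrite ?v0 ?(le_trans (ltW vtau)).
  by rewrite leNgt vtau.
have r_le_ftau : r <= f tau.
  rewrite leNgt; apply/negP => /(cvgr_lt _ (f_cont tau))/nbhs_ballP[e /= e0 near_tau].
  have [v Fv ve] := inf_adherent e0 infF.
  have : f v < r.
    by apply: near_tau; rewrite /ball /= distrC ger0_norm ?subr_ge0 ?inf_le //; lra.
  by case: Fv => _; rewrite leNgt => /negP.
suff le_r : forall v, 0 < v <= tau -> f v <= r.
  by have := step tau; rewrite tau0 tau_t => /(_ isT le_r); rewrite ltNge r_le_ftau.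
move=> v /andP[v0 vtau]; have [vtau'|] := ltP v tau; first by rewrite ltW ?below ?ltW ?v0.
move=> tau_v; have -> : v = tau by apply/eqP; rewrite eq_le vtau tau_v.
have tau_gt0 : 0 < tau := lt_le_trans v0 vtau.
have left_le : \forall x \near tau^'-, f x <= r.
  near=> x; apply/ltW/below; apply/andP; split.
    by apply: ltW; near: x; exact: nbhs_left_gt.
  by near: x; exact: nbhs_left_lt.
exact: ler_cvg_to (cvg_at_left_filter (f_cont tau)) (cvg_cst r) left_le.
Unshelve. all: by end_near.
Qed.

Section SnappingOut.
Variables (R : realType) (m : nat) (c : 'I_m.+1 -> R -> R * R).
Variables (nrm : 'I_m.+1 -> R * R -> R * R) (s : 'I_m.+1 -> R -> R).
Variables (X : R -> R * R) (L : 'I_m.+1 -> R -> R).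
Variables (mu : 'I_m.+1 -> {measure set R -> \bar R}) (x0 : R * R) (W : R -> R * R).

Hypothesis c_smooth : forall j, smooth_simple_closed_curve (c j).
Hypothesis nrm_unit : forall j t, enorm (nrm j (c j t)) = 1.
Hypothesis nrm_cont : forall j, {within range (c j), continuous (nrm j)}.
Hypothesis s_pm1 : forall j w, 0 <= w -> s j w = 1 \/ s j w = -1.
Hypothesis s_rc : forall j w, 0 <= w -> s j x @[x --> w^'+] --> s j w.
Hypothesis X_cont : continuous X.
Hypothesis L0 : forall j, L j 0 = 0.
Hypothesis L_mono : forall j a b, 0 <= a -> a <= b -> L j a <= L j b.
Hypothesis mu_L : forall j a b, 0 <= a -> a <= b ->
  mu j [set` `]a, b]] = (L j b - L j a)%:E.

Definition snap_push j t : R * R :=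
  (\int[mu j]_(r in [set` `]0, t]]) (s j (L j r) * ind (range (c j)) (X r) * (nrm j (X r)).1),
   \int[mu j]_(r in [set` `]0, t]]) (s j (L j r) * ind (range (c j)) (X r) * (nrm j (X r)).2)).

Hypothesis X_sde : forall t, 0 <= t ->
  X t = padd x0 (padd (W t) (\sum_(j < m.+1) (snap_push j t).1, \sum_(j < m.+1) (snap_push j t).2)).

Lemma enorm_snap_push_le j t : 0 <= t -> enorm (snap_push j t) <= L j t.
Proof.
move=> t0; set Dt := [set` `]0, t]] : set R.
have mDt : measurable Dt := measurable_itv _.
have Dt_ge0 u : Dt u -> 0 <= u by rewrite /Dt /= in_itv /= => /andP[/ltW].
have L_ge0 u : Dt u -> 0 <= L j u by move=> /Dt_ge0 u0; rewrite -(L0 j) L_mono.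
have L_monoDt u v : Dt u -> Dt v -> u <= v -> L j u <= L j v.
  by move=> /Dt_ge0 u0 _; exact: L_mono.
have ms := measurable_pm1_comp (@interval_is_interval R _) L_ge0 L_monoDt
  (@s_pm1 j) (@s_rc j) mDt.
have mind (p : R * R -> R) : continuous p ->
    measurable_fun Dt (fun u => ind (range (c j)) (X u) * p (nrm j (X u))).
  move=> p_cont; apply: (measurable_ind_comp (g := p \o nrm j)) mDt X_cont _ _.
    exact: closed_range_curve.
  by apply: within_continuous_comp; [move=> z _; exact: p_cont | exact: nrm_cont].
have fst_cont : continuous (@fst R R) by move=> z; exact: cvg_fst.
have snd_cont : continuous (@snd R R) by move=> z; exact: cvg_snd.
rewrite -[L j t]subr0 -(L0 j); apply: enorm_Rintegral_le (mu_L j (lexx 0) t0) _ _ _ => //.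
- by apply: eq_measurable_fun (measurable_funM ms (mind _ fst_cont)) => u _ /=; rewrite mulrA.
- by apply: eq_measurable_fun (measurable_funM ms (mind _ snd_cont)) => u _ /=; rewrite mulrA.
move=> u Du; rewrite -/(pscale _ (nrm j (X u))) enorm_scale /ind.
case: asboolP => [[t' _ <-]|_]; last by rewrite mulr0 normr0 mul0r ler01.
rewrite mulr1 nrm_unit mulr1.
by have [->|->] := @s_pm1 j _ (L_ge0 _ Du); rewrite ?normrN normr1.
Qed.

Lemma snap_push_eq0 j t :
  (forall u, 0 < u <= t -> ~ range (c j) (X u)) -> snap_push j t = (0, 0).
Proof.
move=> avoid; rewrite /snap_push.
by congr pair; rewrite (@eq_Rintegral _ _ _ _ _ (fun=> 0)) ?Rintegral_cst ?mul0r //;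
  move=> u /set_mem /=; rewrite in_itv /= /ind => /avoid Bu;
  case: asboolP => // _; rewrite mulr0 mul0r.
Qed.

Lemma enorm_displacement_le i t : 0 <= t ->
  (forall u j, 0 < u <= t -> j != i -> ~ range (c j) (X u)) ->
  enorm (psub (psub (X t) x0) (W t)) <= L i t.
Proof.
move=> t0 avoid.
have others j : j != i -> snap_push j t = (0, 0).
  by move=> ji; apply: snap_push_eq0 => u /avoid; apply.
suff -> : psub (psub (X t) x0) (W t) = snap_push i t by exact: enorm_snap_push_le.
rewrite X_sde // !(big_only1 i) // => [|j /others ->|j /others ->] //.
by rewrite [RHS]surjective_pairing /psub /padd /=; congr pair; ring.
Qed.

End SnappingOut.

Unset Implicit Arguments.

Theorem mainTheorem4
  (R : realType) (m : nat)
  (D0 D : set (R * R))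
  (c : 'I_m.+1 -> R -> R * R)
  (nrm : 'I_m.+1 -> R * R -> R * R)
  (lp lm : 'I_m.+1 -> R)
  (alpha beta gamma delta : R) (x0 y : R * R) (i : 'I_m.+1)
  (W : R -> R * R)
  (s : 'I_m.+1 -> R -> R)
  (X : R -> R * R) (L : 'I_m.+1 -> R -> R)
  (mu : 'I_m.+1 -> {measure set R -> \bar R})
  (hD0open : open D0) (hD0bdd : bounded_set D0) (hD : D = closure D0)
  (hDconn : connected D) (hDsc : simply_connected D)
  (hcurves : forall j, smooth_simple_closed_curve (c j))
  (hB0 : range (c ord0) = D `\` D°)
  (hBin : forall j, j != ord0 -> range (c j) `<=` D0)
  (hdisj : forall j k, j != k -> range (c j) `&` range (c k) = set0)
  (hnrm : forall j t,
     [/\ enorm (nrm j (c j t)) = 1,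
         dot (nrm j (c j t)) (vel (c j) t) = 0 &
         exists e : R, 0 < e /\ forall h : R, 0 < h < e ->
           in_bounded_comp (range (c j)) (padd (c j t) (pscale h (nrm j (c j t))))])
  (hnrmcont : forall j, {within range (c j), continuous (nrm j)})
  (hlp : forall j, 0 < lp j) (hlm : forall j, 0 < lm j)
  (hWcont : continuous W) (hW0 : W 0 = (0, 0))
  (hsval : forall (j : 'I_m.+1) (t : R), 0 <= t -> s j t = 1 \/ s j t = -1)
  (hsright : forall (j : 'I_m.+1) (t : R), 0 <= t -> s j x @[x --> t^'+] --> s j t)
  (hsleft : forall (j : 'I_m.+1) (t : R), 0 < t -> cvg (s j x @[x --> t^'-]))
  (hs0 : forall t : R, 0 <= t -> s ord0 t = 1)
  (hsinit : forall j, (pos_side (range (c j)) x0 -> s j 0 = 1) /\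
                      (~ pos_side (range (c j)) x0 -> s j 0 = -1))
  (hXcont : continuous X) (hXD : forall t : R, 0 <= t -> D (X t))
  (hLcont : forall j, continuous (L j))
  (hL0 : forall j, L j 0 = 0)
  (hLmono : forall (j : 'I_m.+1) (a b : R), 0 <= a -> a <= b -> L j a <= L j b)
  (hmu : forall (j : 'I_m.+1) (a b : R), 0 <= a -> a <= b -> mu j [set` `]a, b]] = (L j b - L j a)%:E)
  (hSDE : forall t : R, 0 <= t ->
     X t = padd x0 (padd (W t)
       ( \sum_(j < m.+1) \int[mu j]_(r in [set` `]0, t]])
            (s j (L j r) * ind (range (c j)) (X r) * (nrm j (X r)).1),
         \sum_(j < m.+1) \int[mu j]_(r in [set` `]0, t]])
            (s j (L j r) * ind (range (c j)) (X r) * (nrm j (X r)).2))))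
  (hLsupp : forall (j : 'I_m.+1) (t : R), 0 <= t ->
     L j t = \int[mu j]_(r in [set` `]0, t]]) ind (range (c j)) (X r))
  (hsides : forall (j : 'I_m.+1) (t : R), 0 <= t ->
     (s j (L j t) = 1 -> pos_side (range (c j)) (X t)) /\
     (s j (L j t) = -1 -> neg_side (range (c j)) (X t)))
  (halpha : 0 < alpha) (hbeta : 0 < beta) (hgamma : 0 < gamma)
  (hgamma5 : gamma < 5^-1) (hdelta : 0 < delta) (hdelta2 : delta < 2^-1)
  (hx0 : calD c D lp lm delta x0) (hy : calD c D lp lm delta y)
  (hx0y : enorm (psub x0 y) <= 4 / 5 * r_delta c D lp lm delta)
  (hi : i != ord0)
  (hdiff : (pos_side (range (c i)) x0 /\ ~ pos_side (range (c i)) y) \/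
           (~ pos_side (range (c i)) x0 /\ pos_side (range (c i)) y))
  (hA1 : (E1 (s i) < (alpha * r_delta c D lp lm delta)%:E)%E)
  (hA2 : (E2 (s i) > (beta * r_delta c D lp lm delta)%:E)%E)
  (hA3 : forall t : R, 0 <= t <= r_delta c D lp lm delta ^+ 2 ->
     enorm (psub (W t) (pscale (t / r_delta c D lp lm delta ^+ 2) (psub y x0)))
       <= gamma * r_delta c D lp lm delta) :
  forall t : R, 0 <= t <= r_delta c D lp lm delta ^+ 2 ->
    L i t < (5^-1 - gamma) * r_delta c D lp lm delta ->
    eball x0 (r_delta c D lp lm delta) (X t).
Proof.
move=> t /andP[t0 tr] L_lt; set r := r_delta c D lp lm delta in hx0y hA3 L_lt *.
have far_x0 z : range (c i) z -> r / 5 <= enorm (psub x0 z).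
  by move=> iz; apply: hx0.2; exists i.
have far_y z : range (c i) z -> r / 5 <= enorm (psub y z).
  by move=> iz; apply: hy.2; exists i.
have r_gt0 : 0 < r by have := enorm_psub_gt0_of_sides hdiff; lra.
have [p ip px0] := barrier_between (divr_gt0 r_gt0 (ltr0n _ 5)) far_x0 far_y hdiff.
have only_Bi u j : enorm (psub (X u) x0) <= r -> j != i -> ~ range (c j) (X u).
  move=> near_x0 ji Bj; have /seteqP[/(_ (X u)) + _] := hdisj _ _ ji; apply; split => //.
  apply: (eball_barriers_sub hcurves hdisj hx0.1 _ (r_delta_lt_rho hdelta hdelta2 r_gt0)).
  - by rewrite mulr_ge0 // ltW.
  - by exists p; split => //; rewrite /eball /= -/r; lra.
  by split; [rewrite /eball /= -/r; lra | exists j].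
have nrm_unit j t' : enorm (nrm j (c j t')) = 1 by case: (hnrm j t').
change (enorm (psub (X t) x0) < r).
apply: (continuous_first_exit (t := t) (continuous_enorm_psub (a := x0) hXcont)); last first.
  by rewrite t0 lexx.
move=> tau /andP[tau0 tau_t] near_x0.
have push := enorm_displacement_le hcurves nrm_unit hnrmcont hsval hsright hXcont hL0
  hLmono hmu hSDE tau0 (fun u j u_tau => only_Bi u j (near_x0 u u_tau)).
set q := pscale (tau / r ^+ 2) (psub y x0).
have Wq : enorm (psub (W tau) q) <= gamma * r by apply: hA3; rewrite tau0 (le_trans tau_t tr).
have q_le : enorm q <= enorm (psub x0 y).
  rewrite (enorm_psubC x0) /q enorm_scale_le // divr_ge0 ?sqr_ge0 //=.
  by rewrite ler_pdivrMr ?exprn_gt0 // mul1r (le_trans tau_t).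
have L_le : L i tau <= L i t := hLmono i _ _ tau0 tau_t.
have -> : psub (X tau) x0 = padd (psub (psub (X tau) x0) (W tau)) (padd (psub (W tau) q) q).
  by rewrite [LHS]surjective_pairing /psub /padd /=; congr pair; ring.
apply: le_lt_trans (ler_enormD _ _) _; have := ler_enormD (psub (W tau) q) q.
lra.
Qed.
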